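(* There is no medial T2R semigroup, i.e. no T2R semigroup satisfies the identity $axyb=ayxb$ for all $a,b,x,y$.
   Context: A semigroup $S$ is a $\Delta$-semigroup if the lattice of all congruences of $S$ is a chain with respect to inclusion. A semigroup $N$ with zero $0$ is nil if every element has some power equal to $0$; non-trivial means having more than one element. A T2R semigroup is a $\Delta$-semigroup $S$ which is the disjoint union of a non-trivial nil ideal $S_0$ (with zero $0$, which is then the zero of $S$) and a subsemigroup $S_1=\{u,v\}$, $u\neq v$, which is a right zero semigroup ($xy=y$ for $x,y\in S_1$). *)

From Stdlib Require Import Arith.

Definition associative {S : Type} (mul : S -> S -> S) : Prop :=
  forall x y z, mul x (mul y z) = mul (mul x y) z.

Definition congruence {S : Type} (mul : S -> S -> S) (R : S -> S -> Prop) : Prop :=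
  (forall x, R x x) /\ (forall x y, R x y -> R y x) /\
  (forall x y z, R x y -> R y z -> R x z) /\
  (forall x y c, R x y -> R (mul c x) (mul c y) /\ R (mul x c) (mul y c)).

Definition rel_incl {S : Type} (R1 R2 : S -> S -> Prop) : Prop :=
  forall x y, R1 x y -> R2 x y.

Definition delta_semigroup {S : Type} (mul : S -> S -> S) : Prop :=
  associative mul /\
  forall R1 R2, congruence mul R1 -> congruence mul R2 ->
    rel_incl R1 R2 \/ rel_incl R2 R1.

(* x^n for n >= 1, written as pow x n = x^(n+1) *)
Fixpoint spow {S : Type} (mul : S -> S -> S) (x : S) (n : nat) : S :=
  match n with
  | O => x
  | Datatypes.S m => mul (spow mul x m) x
  end.

Definition T2R {S : Type} (mul : S -> S -> S) : Prop :=
  delta_semigroup mul /\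
  exists (S0 : S -> Prop) (z u v : S),
    S0 z /\ (forall x, S0 x -> mul x z = z /\ mul z x = z) /\
    (forall x y, S0 x -> S0 (mul x y) /\ S0 (mul y x)) /\
    (forall x, S0 x -> exists n, spow mul x n = z) /\
    (exists x, S0 x /\ x <> z) /\
    u <> v /\ ~ S0 u /\ ~ S0 v /\
    (forall x, S0 x \/ x = u \/ x = v) /\
    mul u u = u /\ mul u v = v /\ mul v u = u /\ mul v v = v.

Definition medial {S : Type} (mul : S -> S -> S) : Prop :=
  forall a b x y, mul (mul (mul a x) y) b = mul (mul (mul a y) x) b.


(* The proof repeatedly applies one principle (lemma collapse_S0): in a
   Delta-semigroup a congruence identifying u and v cannot lie inside the Rees
   congruence of S0 (which separates u from v), hence contains it, and so
   identifies every element of S0 with the zero z.  Applying this to suitable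
   congruences yields, for a medial S,
   (1) s p t = z for p in S0 (the sandwich congruence x ~ y iff sxt = syt for
       all s t identifies u and v by mediality);
   (2) p u = p v = z for p in S0 (the kernel of x |-> xw, w in {u,v});
   (3) u x = v x for all x (the Rees congruence of the ideal {x | ux = vx}).
   By (2) and (3) identifying only u and v is a congruence; it does not
   identify a non-zero element of S0 with z, contradicting the principle. *)

Definition rees {S : Type} (I : S -> Prop) (x y : S) : Prop :=
  x = y \/ (I x /\ I y).

Lemma rees_congruence {S : Type} (mul : S -> S -> S) (I : S -> Prop) :
  (forall x y, I x -> I (mul x y) /\ I (mul y x)) -> congruence mul (rees I).
Proof.
  intros ideal; unfold rees.
  assert (left_mul : forall x c, I x -> I (mul c x))
    by (intros x c Ix; exact (proj2 (ideal x c Ix))).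
  assert (right_mul : forall x c, I x -> I (mul x c))
    by (intros x c Ix; exact (proj1 (ideal x c Ix))).
  split; [|split; [|split]].
  - intro x; left; reflexivity.
  - intros x y [-> | [Ix Iy]]; [left | right]; auto.
  - intros x y w [-> | [Ix Iy]] [<- | [Iy' Iw]]; auto.
  - intros x y c [-> | [Ix Iy]]; [split; left; reflexivity|].
    split; right; split; auto.
Qed.

Definition sandwich {S : Type} (mul : S -> S -> S) (x y : S) : Prop :=
  forall s t, mul (mul s x) t = mul (mul s y) t.

Lemma sandwich_congruence {S : Type} (mul : S -> S -> S) :
  associative mul -> congruence mul (sandwich mul).
Proof.
  intros assoc; unfold sandwich; split; [|split; [|split]].
  - reflexivity.
  - intros x y H s t; symmetry; apply H.
  - intros x y w Hxy Hyw s t; rewrite Hxy; apply Hyw.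
  - intros x y c H; split; intros s t.
    + rewrite !assoc; apply H.
    + rewrite !(assoc s), <- !(assoc (mul s _) c t); apply H.
Qed.

Lemma delta_contains {S : Type} (mul : S -> S -> S) (R1 R2 : S -> S -> Prop) a b :
  delta_semigroup mul -> congruence mul R1 -> congruence mul R2 ->
  R1 a b -> ~ R2 a b -> rel_incl R2 R1.
Proof.
  intros [_ chain] C1 C2 R1ab nR2ab.
  destruct (chain R1 R2 C1 C2) as [incl | incl]; [|exact incl].
  exfalso; exact (nR2ab (incl a b R1ab)).
Qed.

Section MedialT2R.

Variables (S : Type) (mul : S -> S -> S).
Hypothesis delta : delta_semigroup mul.

Variables (S0 : S -> Prop) (z u v : S).
Hypothesis S0_z : S0 z.
Hypothesis z_zero_of_S0 : forall x, S0 x -> mul x z = z /\ mul z x = z.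
Hypothesis S0_ideal : forall x y, S0 x -> S0 (mul x y) /\ S0 (mul y x).
Hypothesis u_neq_v : u <> v.
Hypothesis u_notin_S0 : ~ S0 u.
Hypothesis v_notin_S0 : ~ S0 v.
Hypothesis S_cover : forall x, S0 x \/ x = u \/ x = v.
Hypotheses (uu : mul u u = u) (uv : mul u v = v) (vu : mul v u = u) (vv : mul v v = v).
Hypothesis medial_mul : medial mul.

Let assoc : associative mul := proj1 delta.

Definition in_uv (x : S) : Prop := x = u \/ x = v.

Lemma right_zero_uv a b : in_uv a -> in_uv b -> mul a b = b.
Proof. intros [-> | ->] [-> | ->]; assumption. Qed.

Lemma in_uv_notin_S0 x : in_uv x -> ~ S0 x.
Proof. intros [-> | ->]; assumption. Qed.

Lemma z_zero s : mul s z = z /\ mul z s = z.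
Proof.
  assert (zz : mul z z = z) by apply (z_zero_of_S0 z S0_z).
  split; rewrite <- zz at 1.
  - rewrite assoc; exact (proj1 (z_zero_of_S0 _ (proj2 (S0_ideal z s S0_z)))).
  - rewrite <- assoc; exact (proj2 (z_zero_of_S0 _ (proj1 (S0_ideal z s S0_z)))).
Qed.

Lemma collapse_S0 (X : S -> S -> Prop) :
  congruence mul X -> X u v -> forall p, S0 p -> X p z.
Proof.
  intros CX Xuv p Sp.
  apply (delta_contains mul X (rees S0) u v); auto.
  - apply rees_congruence; exact S0_ideal.
  - intros [E | [Su _]]; contradiction.
  - right; split; assumption.
Qed.

(* (1) Mediality makes u and v indistinguishable in two-sided contexts,
   so every sandwich s p t with p in S0 is z. *)
Lemma sandwich_S0 s p t : S0 p -> mul (mul s p) t = z.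
Proof.
  intros Sp.
  assert (uv_sandwich : sandwich mul u v).
  { intros s' t'; pose proof (medial_mul s' t' u v) as M.
    rewrite <- (assoc s' u v), <- (assoc s' v u), uv, vu in M; symmetry; exact M. }
  rewrite (collapse_S0 _ (sandwich_congruence mul assoc) uv_sandwich p Sp s t).
  rewrite (proj1 (z_zero s)); apply z_zero.
Qed.

(* (2) Elements of S0 annihilate u and v from the left, using the kernel of
   right multiplication by w. *)
Lemma S0_annihilates_uv p w : S0 p -> in_uv w -> mul p w = z.
Proof.
  intros Sp Uw.
  assert (C : congruence mul (fun x y => mul x w = mul y w)).
  { split; [|split; [|split]].
    - reflexivity.
    - intros x y H; symmetry; exact H.
    - intros x y w' H1 H2; rewrite H1; exact H2.
    - intros x y c H; split.
      + rewrite <- !assoc, H; reflexivity.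
      + destruct (S_cover c) as [Sc | Uc].
        * rewrite !sandwich_S0; auto.
        * rewrite <- !assoc, (right_zero_uv c w); auto. }
  assert (uw_vw : mul u w = mul v w).
  { rewrite !right_zero_uv; unfold in_uv; auto. }
  rewrite (collapse_S0 _ C uw_vw p Sp); apply z_zero.
Qed.

(* (3) The elements on which u and v act equally form an ideal containing
   u and v; its Rees congruence therefore absorbs S0, so it is all of S. *)
Definition uv_equalizer (x : S) : Prop := mul u x = mul v x.

Lemma uv_equalizer_ideal x y :
  uv_equalizer x -> uv_equalizer (mul x y) /\ uv_equalizer (mul y x).
Proof.
  unfold uv_equalizer; intros E; split.
  - rewrite !assoc, E; reflexivity.
  - rewrite !assoc; destruct (S_cover y) as [Sy | [-> | ->]].
    + rewrite !sandwich_S0; auto.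
    + rewrite uu, vu; reflexivity.
    + rewrite uv, vv; reflexivity.
Qed.

Lemma uv_act_equally x : mul u x = mul v x.
Proof.
  assert (Eu : uv_equalizer u) by (unfold uv_equalizer; rewrite uu, vu; reflexivity).
  assert (Ev : uv_equalizer v) by (unfold uv_equalizer; rewrite uv, vv; reflexivity).
  destruct (S_cover x) as [Sx | [-> | ->]]; [|exact Eu|exact Ev].
  destruct (collapse_S0 (rees uv_equalizer) (rees_congruence mul _ uv_equalizer_ideal)
              (or_intror (conj Eu Ev)) x Sx) as [-> | [Ex _]]; [|exact Ex].
  rewrite !(proj1 (z_zero _)); reflexivity.
Qed.

Lemma uv_congruence : congruence mul (fun x y => x = y \/ (in_uv x /\ in_uv y)).
Proof.
  split; [|split; [|split]].
  - intro x; left; reflexivity.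
  - intros x y [-> | [Ux Uy]]; auto.
  - intros x y w [-> | [Ux Uy]] [<- | [Uy' Uw]]; auto.
  - intros x y c [-> | [Ux Uy]]; [split; left; reflexivity|]; split.
    + destruct (S_cover c) as [Sc | Uc].
      * left; rewrite !S0_annihilates_uv; auto.
      * right; rewrite !(right_zero_uv c); auto.
    + left; destruct Ux as [-> | ->], Uy as [-> | ->];
        auto using uv_act_equally, eq_sym.
Qed.

Lemma S0_trivial p : S0 p -> p = z.
Proof.
  intros Sp.
  destruct (collapse_S0 _ uv_congruence (or_intror (conj (or_introl eq_refl)
              (or_intror eq_refl))) p Sp) as [E | [_ Uz]]; [exact E|].
  exfalso; exact (in_uv_notin_S0 z Uz S0_z).
Qed.

End MedialT2R.

Theorem mainTheorem11 (S : Type) (mul : S -> S -> S) :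
  T2R mul -> ~ medial mul.
Proof.
  intros [delta (S0 & z & u & v & S0_z & z_zero & S0_ideal & _ & (p & Sp & p_nz) &
                 u_neq_v & u_notin & v_notin & cover & uu & uv & vu & vv)] med.
  apply p_nz.
  exact (S0_trivial S mul delta S0 z u v S0_z z_zero S0_ideal u_neq_v u_notin v_notin
           cover uu uv vu vv med p Sp).
Qed.
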